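(* Let $n\ge1$, $q$ a prime power, $s\in\mathbb{F}_q$, and let $(\mathsf{Enc},\mathcal{A})$ be an $n$-party one-round aggregation protocol over $\mathbb{F}_q$ with encoder $\mathsf{Enc}:\mathbb{F}_q\to[\ell]^m$. For $\mathbf{x}\in\mathcal{B}_s$ and $\mathbf{y}\in[\ell]^{nm}$ let $p_{\mathbf{x},\mathbf{y}}=\Pr_{Y\sim\mathcal{S}^{\mathsf{Enc}}_{\mathbf{x}}}[Y=\mathbf{y}]$, $p_{\mathbf{y}}=\sum_{\mathbf{x}\in\mathcal{B}_s}p_{\mathbf{x},\mathbf{y}}$, and $d_{\mathbf{y}}=q^{-(2n-2)}\sum_{\mathbf{x}\in\mathcal{B}_s}\sum_{\mathbf{x}'\in\mathcal{B}_s}|p_{\mathbf{x},\mathbf{y}}-p_{\mathbf{x}',\mathbf{y}}|$. Then for every $\mathbf{y}\in[\ell]^{nm}$, $$d_{\mathbf{y}}\ge 2\left(1-\frac{n^{nm}}{q^{n-1}}\right)\frac{p_{\mathbf{y}}}{q^{n-1}}.$$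
   Context: $\mathcal{B}_s=\{\mathbf{x}\in\mathbb{F}_q^n:\sum_ix_i=s\}$. An $n$-party one-round aggregation protocol over $\mathbb{F}_q$ with $m$ messages per party consists of a randomized encoder $\mathsf{Enc}:\mathbb{F}_q\to[\ell]^m$ (for some positive integer $\ell$; each party applies it to its input with independent randomness) and an analyzer $\mathcal{A}:[\ell]^{nm}\to\mathbb{F}_q$ such that for every $\mathbf{x}\in\mathbb{F}_q^n$, every possible realization of the encodings $\mathsf{Enc}(x_1),\dots,\mathsf{Enc}(x_n)$, and every permutation $\pi$ of $[nm]$, the analyzer applied to the concatenation $(\mathsf{Enc}(x_1),\dots,\mathsf{Enc}(x_n))$ with coordinates permuted by $\pi$ outputs $\sum_i x_i$. $\mathcal{S}^{\mathsf{Enc}}_{\mathbf{x}}$ is the distribution on $[\ell]^{nm}$ of this concatenation after applying an independent uniformly random permutation of the $nm$ coordinates. *)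

From HB Require Import structures.
From mathcomp Require Import all_boot all_order all_algebra.
From mathcomp Require Import fingroup perm.
Set Implicit Arguments. Unset Strict Implicit. Unset Printing Implicit Defensive.
Import Order.TTheory GRing.Theory Num.Theory.
Local Open Scope ring_scope.

(* Positions 0..nm-1 of the concatenated transcript: position j holds the
   (j %% m)-th message of party (j %/ m). *)
Lemma party_of_lt (n m : nat) (j : 'I_(n * m)) : (j %/ m < n)%N.
Proof.
case: m j => [|m] j; first by case: j => /= k; rewrite muln0.
by rewrite ltn_divLR // (ltn_ord j).
Qed.

Lemma msg_of_lt (n m : nat) (j : 'I_(n * m)) : (j %% m < m)%N.
Proof.
case: m j => [|m] j; first by case: j => /= k; rewrite muln0.
by rewrite ltn_pmod.
Qed.

Definition party_of (n m : nat) (j : 'I_(n * m)) : 'I_n := Ordinal (party_of_lt j).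
Definition msg_of (n m : nat) (j : 'I_(n * m)) : 'I_m := Ordinal (msg_of_lt j).

Definition concat_enc (n m l : nat) (e : {ffun 'I_n -> {ffun 'I_m -> 'I_l}})
  : {ffun 'I_(n * m) -> 'I_l} :=
  [ffun j => e (party_of j) (msg_of j)].

Definition permute_coords (N l : nat) (pi : {perm 'I_N}) (w : {ffun 'I_N -> 'I_l})
  : {ffun 'I_N -> 'I_l} := [ffun j => w (pi j)].

Definition is_encoder (R : realFieldType) (F : finFieldType) (m l : nat)
  (Enc : F -> {ffun 'I_m -> 'I_l} -> R) : Prop :=
  forall a : F, (forall o, 0 <= Enc a o) /\ \sum_o Enc a o = 1.

Definition is_aggregation_protocol (R : realFieldType) (F : finFieldType)
  (n m l : nat) (Enc : F -> {ffun 'I_m -> 'I_l} -> R)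
  (A : {ffun 'I_(n * m) -> 'I_l} -> F) : Prop :=
  (0 < l)%N /\ is_encoder Enc /\
  forall (x : {ffun 'I_n -> F}) (e : {ffun 'I_n -> {ffun 'I_m -> 'I_l}}),
    (forall i, 0 < Enc (x i) (e i)) ->
    forall pi : {perm 'I_(n * m)},
      A (permute_coords pi (concat_enc e)) = \sum_i x i.

Definition Bset (F : finFieldType) (n : nat) (s : F) : {set {ffun 'I_n -> F}} :=
  [set x : {ffun 'I_n -> F} | \sum_i x i == s].

(* p_{x,y} = Pr_{Y ~ S^Enc_x}[Y = y]: independent encodings, then a
   uniformly random permutation of the nm coordinates. *)
Definition shuffled_prob (R : realFieldType) (F : finFieldType) (n m l : nat)
  (Enc : F -> {ffun 'I_m -> 'I_l} -> R) (x : {ffun 'I_n -> F})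
  (y : {ffun 'I_(n * m) -> 'I_l}) : R :=
  ((n * m)`!)%:R^-1 *
  \sum_(pi : {perm 'I_(n * m)})
    \sum_(e : {ffun 'I_n -> {ffun 'I_m -> 'I_l}})
      (\prod_i Enc (x i) (e i)) * (permute_coords pi (concat_enc e) == y)%:R.

From HB Require Import structures.
From mathcomp Require Import all_boot all_order all_algebra.
From mathcomp Require Import fingroup perm.
From mathcomp Require Import ring lra.
Set Implicit Arguments. Unset Strict Implicit. Unset Printing Implicit Defensive.
Import Order.TTheory GRing.Theory Num.Theory.
Local Open Scope ring_scope.

(* If y occurs with positive probability from x, it arises from some encodings
   of x shuffled by some pi, and the party pattern of pi (which party each of
   the nm coordinates comes from; at most n^(nm) possibilities) determines x:
   given two witnesses with the same pattern, the messages of any one party i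
   can be swapped from one into the other while still producing y, so the
   correctness of the analyzer forces x_i = x'_i. Thus p_(x,y) vanishes on all
   but n^(nm) of the q^(n-1) points of B_s, and every pair (x, x') in which
   exactly one of p_(x,y), p_(x',y) vanishes contributes the other to d_y. *)

Lemma abs_sub_ge_zero_indicators (R : realDomainType) (a b : R) :
  0 <= a -> 0 <= b -> (a == 0)%:R * b + (b == 0)%:R * a <= `|a - b|.
Proof.
move=> a0 b0; have [-> | an0] := eqVneq a 0; have [-> | bn0] := eqVneq b 0.
- by rewrite !mul1r subrr normr0 addr0.
- by rewrite mul1r mul0r addr0 sub0r normrN ger0_norm.
- by rewrite mul0r mul1r add0r subr0 ger0_norm.
- by rewrite !mul0r addr0.
Qed.

Lemma sum_abs_sub_ge_zeros (R : realDomainType) (T : finType)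
    (f : T -> R) (B : {set T}) :
  (forall x, 0 <= f x) ->
  2 * (#|[set x in B | f x == 0]|%:R * \sum_(x in B) f x) <=
  \sum_(x in B) \sum_(x' in B) `|f x - f x'|.
Proof.
move=> f0; set Z := [set x in B | f x == 0].
have zeros_rows : \sum_(x in B) \sum_(x' in B) (f x == 0)%:R * f x' =
    #|Z|%:R * \sum_(x in B) f x.
  under eq_bigr do rewrite -mulr_sumr.
  rewrite -mulr_suml; congr (_ * _).
  rewrite -sum1_card natr_sum big_mkcond [RHS]big_mkcond; apply: eq_bigr => x _.
  by rewrite inE; case: (x \in B); case: (f x == 0).
have zeros_cols : \sum_(x in B) \sum_(x' in B) (f x' == 0)%:R * f x =
    #|Z|%:R * \sum_(x in B) f x.
  by rewrite exchange_big.
rewrite mulr_natl mulr2n -{1}zeros_rows -zeros_cols -big_split /=.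
apply: ler_sum => x _; rewrite -big_split /=; apply: ler_sum => x' _.
exact: abs_sub_ge_zero_indicators.
Qed.

Lemma card_Bset (F : finFieldType) (n : nat) (s : F) :
  (0 < n)%N -> #|Bset n s| = (#|F| ^ n.-1)%N.
Proof.
case: n => // n _.
pose restr (x : {ffun 'I_n.+1 -> F}) : {ffun 'I_n -> F} :=
  [ffun k => x (lift ord_max k)].
pose ext (z : {ffun 'I_n -> F}) : {ffun 'I_n.+1 -> F} :=
  [ffun i => if unlift ord_max i is Some k then z k else s - \sum_k z k].
have sum_lift (x : {ffun 'I_n.+1 -> F}) :
    \sum_i x i = x ord_max + \sum_k restr x k.
  by rewrite (bigD1_ord ord_max) //=; congr (_ + _); apply: eq_bigr => k; rewrite ffunE.
have restr_onto : restr @: Bset n.+1 s = setT.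
  apply/setP => z; rewrite inE; apply/imsetP; exists (ext z).
    have restr_ext : restr (ext z) = z by apply/ffunP => k; rewrite !ffunE liftK.
    by rewrite inE sum_lift restr_ext ffunE unlift_none subrK.
  by apply/ffunP => k; rewrite !ffunE liftK.
rewrite -(card_in_imset (f := restr)) ?restr_onto ?cardsT ?card_ffun ?card_ord //.
move=> x1 x2; rewrite !inE !sum_lift => /eqP sum1 /eqP sum2 restr12.
apply/ffunP => i; case: (unliftP ord_max i) => [k -> | ->].
  by move/ffunP: restr12 => /(_ k); rewrite !ffunE.
by apply: (@addIr _ (\sum_k restr x1 k)); rewrite sum1 restr12 sum2.
Qed.

Definition party_pattern (n m : nat) (pi : {perm 'I_(n * m)}) :
  {ffun 'I_(n * m) -> 'I_n} := [ffun j => party_of (pi j)].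

Definition splice_at (I : finType) (T : Type) (i : I) (u v : {ffun I -> T}) :
  {ffun I -> T} := [ffun k => if k == i then v k else u k].

Lemma permute_concat_splice (n m l : nat) (pi pi' : {perm 'I_(n * m)})
    (e e' : {ffun 'I_n -> {ffun 'I_m -> 'I_l}}) (i : 'I_n) :
  party_pattern pi = party_pattern pi' ->
  permute_coords pi' (concat_enc e') = permute_coords pi (concat_enc e) ->
  exists pi'' : {perm 'I_(n * m)},
    permute_coords pi'' (concat_enc (splice_at i e e')) =
    permute_coords pi (concat_enc e).
Proof.
move=> /ffunP same_pattern /ffunP same_shuffle.
have {}same_pattern j : party_of (pi' j) = party_of (pi j).
  by have := same_pattern j; rewrite !ffunE.
pose f j := if party_of (pi j) == i then pi' j else pi j.
have f_inj : injective f.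
  move=> j1 j2; rewrite /f -[in X in X -> _]same_pattern.
  case: eqP => h1; case: eqP => h2; try exact: perm_inj.
  - by move=> fj; case: h2; rewrite -fj.
  - by move=> fj; case: h1; rewrite same_pattern fj same_pattern.
exists (perm f_inj); apply/ffunP => j; rewrite !ffunE permE /f.
have [pi_j | /negbTE pi_j] := eqVneq (party_of (pi j)) i; last by rewrite pi_j.
by have := same_shuffle j; rewrite !ffunE same_pattern pi_j eqxx.
Qed.

Lemma mass_bound_from_zeros (R : realFieldType) (N K D P S : R) :
  0 < N -> 0 <= P -> N <= D + K -> 2 * (D * P) <= S ->
  2 * (1 - K / N) * (P / N) <= (N * N)^-1 * S.
Proof.
move=> N_gt0 P_ge0 N_le S_ge.
have -> : 2 * (1 - K / N) * (P / N) = (N * N)^-1 * (2 * ((N - K) * P)).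
  by field; rewrite gt_eqF.
apply: ler_wpM2l; first by rewrite invr_ge0 mulr_ge0 // ltW.
apply: le_trans S_ge; apply: ler_wpM2l => //; apply: ler_wpM2r => //; lra.
Qed.

Section ShuffledSupport.

Variables (R : realFieldType) (F : finFieldType) (n m l : nat).
Variables (Enc : F -> {ffun 'I_m -> 'I_l} -> R) (A : {ffun 'I_(n * m) -> 'I_l} -> F).
Variable y : {ffun 'I_(n * m) -> 'I_l}.

Definition shuffle_witness (x : {ffun 'I_n -> F}) (pi : {perm 'I_(n * m)})
    (e : {ffun 'I_n -> {ffun 'I_m -> 'I_l}}) : bool :=
  [forall i, 0 < Enc (x i) (e i)] && (permute_coords pi (concat_enc e) == y).

Lemma shuffled_prob_ge0 x : is_encoder Enc -> 0 <= shuffled_prob Enc x y.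
Proof.
move=> encE; rewrite mulr_ge0 ?invr_ge0 ?ler0n //.
do 2!apply: sumr_ge0 => ? _; rewrite mulr_ge0 ?ler0n //.
by apply: prodr_ge0 => i _; case: (encE (x i)).
Qed.

Lemma shuffled_prob_witness x :
  is_encoder Enc -> shuffled_prob Enc x y != 0 ->
  [exists pi, exists e, shuffle_witness x pi e].
Proof.
move=> encE; apply: contraNT; rewrite negb_exists => /forallP no_witness.
rewrite /shuffled_prob big1 ?mulr0 // => pi _; apply: big1 => e _.
move: (no_witness pi); rewrite negb_exists => /forallP /(_ e).
rewrite negb_and negb_forall => /orP[/existsP[i Enc_i] | /negbTE ->]; last by rewrite mulr0.
have Enc_i0 : Enc (x i) (e i) = 0.
  by apply/eqP; rewrite eq_le leNgt Enc_i; case: (encE (x i)) => ->.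
by rewrite (bigD1 i) //= Enc_i0 !mul0r.
Qed.

Hypothesis aggP : is_aggregation_protocol Enc A.

Lemma shuffle_witness_output x pi e :
  shuffle_witness x pi e -> A y = \sum_i x i.
Proof.
case: aggP => _ [_ agg_sum] /andP[/forallP Enc_pos /eqP <-].
exact: agg_sum.
Qed.

(* Splicing party [i] of one witness into another yields a witness for the
   input vector in which only [x i] changed, so the aggregate pins [x i]. *)
Lemma shuffle_witness_pattern_inj x x' pi pi' e e' :
  shuffle_witness x pi e -> shuffle_witness x' pi' e' ->
  party_pattern pi = party_pattern pi' -> x = x'.
Proof.
move=> wit wit' same_pattern; apply/ffunP => i.
have /andP[/forallP Enc_pos /eqP shuffle_y] := wit.
have /andP[/forallP Enc_pos' /eqP shuffle_y'] := wit'.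
have [pi'' splice_y] := permute_concat_splice i same_pattern
  (etrans shuffle_y' (esym shuffle_y)).
have wit'' : shuffle_witness (splice_at i x x') pi'' (splice_at i e e').
  apply/andP; split; last by rewrite splice_y shuffle_y.
  by apply/forallP => k; rewrite !ffunE; case: ifP.
have := shuffle_witness_output wit''; rewrite (shuffle_witness_output wit).
rewrite [in LHS](bigD1 i) //= [in RHS](bigD1 i) //= !ffunE eqxx.
under [in RHS]eq_bigr => k /negbTE k_i do rewrite ffunE k_i.
by move/addIr.
Qed.

Lemma card_shuffled_support :
  (#|[set x | shuffled_prob Enc x y != 0%R]| <= n ^ (n * m))%N.
Proof.
have encE : is_encoder Enc by case: aggP => _ [].
pose pattern_of x :=
  party_pattern (odflt 1%g [pick pi | [exists e, shuffle_witness x pi e]]).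
have pick_witness x : x \in [set x | shuffled_prob Enc x y != 0] ->
    exists2 pi, [pick pi | [exists e, shuffle_witness x pi e]] = Some pi &
      exists e, shuffle_witness x pi e.
  rewrite inE => /(shuffled_prob_witness encE) /existsP[pi0 wit0].
  case: pickP => [pi /existsP[e wit] | none]; first by exists pi; last exists e.
  by have := none pi0; rewrite wit0.
rewrite -(card_in_imset (f := pattern_of)).
  by apply: leq_trans (max_card _) _; rewrite card_ffun !card_ord.
move=> x1 x2 /pick_witness[pi1 pick1 [e1 wit1]] /pick_witness[pi2 pick2 [e2 wit2]].
by rewrite /pattern_of pick1 pick2; apply: shuffle_witness_pattern_inj wit1 wit2.
Qed.

End ShuffledSupport.

Theorem mainTheorem13 (R : realFieldType) (F : finFieldType) (n m l : nat)
  (s : F) (Enc : F -> {ffun 'I_m -> 'I_l} -> R)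
  (A : {ffun 'I_(n * m) -> 'I_l} -> F) :
  (1 <= n)%N ->
  is_aggregation_protocol Enc A ->
  forall y : {ffun 'I_(n * m) -> 'I_l},
    let q : R := (#|F|)%:R in
    let p := fun x => shuffled_prob Enc x y in
    let p_y := \sum_(x in Bset n s) p x in
    let d_y := (q ^+ (2 * n - 2))^-1 *
               \sum_(x in Bset n s) \sum_(x' in Bset n s) `|p x - p x'| in
    2 * (1 - (n ^ (n * m))%:R / q ^+ (n - 1)) * (p_y / q ^+ (n - 1)) <= d_y.
Proof.
move=> n_gt0 aggP y /=; set q : R := #|F|%:R.
pose p x := shuffled_prob Enc x y.
set B := Bset n s; set Z := [set x in B | p x == 0].
have p_ge0 x : 0 <= p x by apply: shuffled_prob_ge0; case: aggP => _ [].
have dist_ge := sum_abs_sub_ge_zeros B p_ge0.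
have card_B : #|B|%:R = q ^+ (n - 1) by rewrite card_Bset // natrX subn1.
have card_BZ : (#|B| <= #|Z| + n ^ (n * m))%N.
  rewrite -(cardsID [set x | p x != 0] B) addnC leq_add //.
    by apply: subset_leq_card; apply/subsetP => x; rewrite !inE negbK andbC.
  exact: leq_trans (subset_leq_card (subsetIr _ _)) (card_shuffled_support y aggP).
have q2 : q ^+ (2 * n - 2) = q ^+ (n - 1) * q ^+ (n - 1).
  by rewrite -exprD addnn -mul2n mulnBr muln1.
rewrite q2 -card_B; apply: mass_bound_from_zeros dist_ge.
- by rewrite card_B exprn_gt0 // ltr0n; apply/card_gt0P; exists 0.
- exact: sumr_ge0.
- by rewrite -natrD ler_nat.
Qed.
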